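(* Consider the closed-loop lumped-parameter (0D) circulation model described in the context, and let its state functions be differentiable on $(0,T)$ and satisfy the system (i)–(iii) of the context for all $t\in(0,T)$. Then for all $t\in(0,T)$, $$\frac{d}{dt}\mathcal{M}(t)=\Pi^{\mathrm{act}}(t)+\Pi^{\mathrm{diss}}(t)+\Pi^{\mathrm{ex}}(t),$$ where $\mathcal{M},\Pi^{\mathrm{act}},\Pi^{\mathrm{diss}},\Pi^{\mathrm{ex}}$ are as defined in the context.
   Context: Chamber indices $i\in\{\mathrm{LA},\mathrm{LV},\mathrm{RA},\mathrm{RV}\}$ (left/right atrium/ventricle); vascular indices $j\in\{\mathrm{AR},\mathrm{VEN}\}$, $k\in\{\mathrm{SYS},\mathrm{PUL}\}$. Positive constants $C_j^k,R_j^k,L_j^k$, constants $V_{0,i}$ and $E_i^{\mathrm{pass}}>0$, given functions $E_i^{\mathrm{act}}(t)$ and $p_{\mathrm{EX}}(t)$, and for each valve $v\in\{\mathrm{MV},\mathrm{AV},\mathrm{TV},\mathrm{PV}\}$ a resistance function $R_v(p_1,p_2)=R_{\min}$ if $p_1<p_2$ and $R_{\max}$ if $p_1\ge p_2$, with $0<R_{\min}$, $R_{\max}<\infty$. Set $E_i(t)=E_i^{\mathrm{pass}}+E_i^{\mathrm{act}}(t)$. Unknowns: volumes $V_i(t)$, pressures $p_j^k(t)$, flows $Q_j^k(t)$. (i) Algebraic relations: $p_i=p_{\mathrm{EX}}+E_i(V_i-V_{0,i})$ for each chamber $i$; $Q_{\mathrm{MV}}=\frac{p_{\mathrm{LA}}-p_{\mathrm{LV}}}{R_{\mathrm{MV}}(p_{\mathrm{LA}},p_{\mathrm{LV}})}$,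 $Q_{\mathrm{AV}}=\frac{p_{\mathrm{LV}}-p_{\mathrm{AR}}^{\mathrm{SYS}}}{R_{\mathrm{AV}}(p_{\mathrm{LV}},p_{\mathrm{AR}}^{\mathrm{SYS}})}$, $Q_{\mathrm{TV}}=\frac{p_{\mathrm{RA}}-p_{\mathrm{RV}}}{R_{\mathrm{TV}}(p_{\mathrm{RA}},p_{\mathrm{RV}})}$, $Q_{\mathrm{PV}}=\frac{p_{\mathrm{RV}}-p_{\mathrm{AR}}^{\mathrm{PUL}}}{R_{\mathrm{PV}}(p_{\mathrm{RV}},p_{\mathrm{AR}}^{\mathrm{PUL}})}$. (ii) Chamber and compliance equations: $\dot V_{\mathrm{LA}}=Q_{\mathrm{VEN}}^{\mathrm{PUL}}-Q_{\mathrm{MV}}$, $\dot V_{\mathrm{LV}}=Q_{\mathrm{MV}}-Q_{\mathrm{AV}}$, $\dot V_{\mathrm{RA}}=Q_{\mathrm{VEN}}^{\mathrm{SYS}}-Q_{\mathrm{TV}}$, $\dot V_{\mathrm{RV}}=Q_{\mathrm{TV}}-Q_{\mathrm{PV}}$; $C_{\mathrm{AR}}^{\mathrm{SYS}}\dot p_{\mathrm{AR}}^{\mathrm{SYS}}=Q_{\mathrm{AV}}-Q_{\mathrm{AR}}^{\mathrm{SYS}}$, $C_{\mathrm{VEN}}^{\mathrm{SYS}}\dot p_{\mathrm{VEN}}^{\mathrm{SYS}}=Q_{\mathrm{AR}}^{\mathrm{SYS}}-Q_{\mathrm{VEN}}^{\mathrm{SYS}}$, $C_{\mathrm{AR}}^{\mathrm{PUL}}\dot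 p_{\mathrm{AR}}^{\mathrm{PUL}}=Q_{\mathrm{PV}}-Q_{\mathrm{AR}}^{\mathrm{PUL}}$, $C_{\mathrm{VEN}}^{\mathrm{PUL}}\dot p_{\mathrm{VEN}}^{\mathrm{PUL}}=Q_{\mathrm{AR}}^{\mathrm{PUL}}-Q_{\mathrm{VEN}}^{\mathrm{PUL}}$. (iii) Inductance equations: $\frac{L_{\mathrm{AR}}^{\mathrm{SYS}}}{R_{\mathrm{AR}}^{\mathrm{SYS}}}\dot Q_{\mathrm{AR}}^{\mathrm{SYS}}=-Q_{\mathrm{AR}}^{\mathrm{SYS}}-\frac{p_{\mathrm{VEN}}^{\mathrm{SYS}}-p_{\mathrm{AR}}^{\mathrm{SYS}}}{R_{\mathrm{AR}}^{\mathrm{SYS}}}$, $\frac{L_{\mathrm{VEN}}^{\mathrm{SYS}}}{R_{\mathrm{VEN}}^{\mathrm{SYS}}}\dot Q_{\mathrm{VEN}}^{\mathrm{SYS}}=-Q_{\mathrm{VEN}}^{\mathrm{SYS}}-\frac{p_{\mathrm{RA}}-p_{\mathrm{VEN}}^{\mathrm{SYS}}}{R_{\mathrm{VEN}}^{\mathrm{SYS}}}$, $\frac{L_{\mathrm{AR}}^{\mathrm{PUL}}}{R_{\mathrm{AR}}^{\mathrm{PUL}}}\dot Q_{\mathrm{AR}}^{\mathrm{PUL}}=-Q_{\mathrm{AR}}^{\mathrm{PUL}}-\frac{p_{\mathrm{VEN}}^{\mathrm{PUL}}-p_{\mathrm{AR}}^{\mathrm{PUL}}}{R_{\mathrm{AR}}^{\mathrm{PUL}}}$,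 $\frac{L_{\mathrm{VEN}}^{\mathrm{PUL}}}{R_{\mathrm{VEN}}^{\mathrm{PUL}}}\dot Q_{\mathrm{VEN}}^{\mathrm{PUL}}=-Q_{\mathrm{VEN}}^{\mathrm{PUL}}-\frac{p_{\mathrm{LA}}-p_{\mathrm{VEN}}^{\mathrm{PUL}}}{R_{\mathrm{VEN}}^{\mathrm{PUL}}}$. Energies and powers: $\mathcal{M}=\sum_i\mathcal{E}_i+\sum_{j,k}(\mathcal{E}_j^k+\mathcal{K}_j^k)$ with $\mathcal{E}_i=\tfrac12E_i^{\mathrm{pass}}(V_i-V_{0,i})^2$, $\mathcal{E}_j^k=\tfrac12C_j^k(p_j^k)^2$, $\mathcal{K}_j^k=\tfrac12L_j^k(Q_j^k)^2$. $\Pi^{\mathrm{act}}=\sum_i\Pi_i^{\mathrm{act}}$ with $\Pi_i^{\mathrm{act}}=-E_i^{\mathrm{act}}(V_i-V_{0,i})\dot V_i$. $\Pi^{\mathrm{ex}}=\sum_i(-p_{\mathrm{EX}}\dot V_i)$. $\Pi^{\mathrm{diss}}=\Pi_{\mathrm{MV}}+\Pi_{\mathrm{AV}}+\Pi_{\mathrm{TV}}+\Pi_{\mathrm{PV}}+\sum_{j,k}\Pi_j^k$, with $\Pi_j^k=-R_j^k(Q_j^k)^2$, $\Pi_{\mathrm{MV}}=-\frac{(p_{\mathrm{LA}}-p_{\mathrm{LV}})^2}{R_{\mathrm{MV}}(p_{\mathrm{LA}},p_{\mathrm{LV}})}$, $\Pi_{\mathrm{AV}}=-\frac{(p_{\mathrm{LV}}-p_{\mathrm{AR}}^{\mathrm{SYS}})^2}{R_{\mathrm{AV}}(p_{\mathrm{LV}},p_{\mathrm{AR}}^{\mathrm{SYS}})}$,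 $\Pi_{\mathrm{TV}}=-\frac{(p_{\mathrm{RA}}-p_{\mathrm{RV}})^2}{R_{\mathrm{TV}}(p_{\mathrm{RA}},p_{\mathrm{RV}})}$, $\Pi_{\mathrm{PV}}=-\frac{(p_{\mathrm{RV}}-p_{\mathrm{AR}}^{\mathrm{PUL}})^2}{R_{\mathrm{PV}}(p_{\mathrm{RV}},p_{\mathrm{AR}}^{\mathrm{PUL}})}$. *)

From Stdlib Require Import Reals.
Open Scope R_scope.

Inductive chamber := LA | LV | RA | RV.
(* Vascular compartments: j in {AR, VEN}, k in {SYS, PUL}. *)
Inductive vjk := ARSYS | VENSYS | ARPUL | VENPUL.
Inductive valve := MV | AV | TV | PV.

Definition sum_ch (f : chamber -> R) : R := f LA + f LV + f RA + f RV.
Definition sum_jk (f : vjk -> R) : R := f ARSYS + f VENSYS + f ARPUL + f VENPUL.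
Definition sum_valve (f : valve -> R) : R := f MV + f AV + f TV + f PV.

Definition Rvalve (Rmin Rmax : R) (p1 p2 : R) : R :=
  if Rlt_dec p1 p2 then Rmin else Rmax.

From Stdlib Require Import Reals Lra.
Open Scope R_scope.

(* Differentiating the stored energy gives, for every chamber and
   compliance, pressure times net inflow, and for every inductance, flow times
   pressure drop.  The chamber law splits the chamber pressure into its passive,
   active and external parts, and the inductance law turns the flow power into a
   resistive loss.  What remains is a sum of node pressures times net inflows
   plus flows times drops along the vessels; by conservation at the eight nodes
   (Tellegen's theorem for the closed loop) it equals minus the power dissipated
   at the four valves. *)

Lemma derivable_pt_lim_sub_const (f : R -> R) (c x l : R) :
  derivable_pt_lim f x l -> derivable_pt_lim (fun y => f y - c) x l.
Proof.
  intro Hf.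
  replace l with (l - 0) by ring.
  exact (derivable_pt_lim_minus f (fct_cte c) x l 0 Hf (derivable_pt_lim_const c x)).
Qed.

Lemma derivable_pt_lim_half_sq (f : R -> R) (k x l : R) :
  derivable_pt_lim f x l -> derivable_pt_lim (fun y => / 2 * k * f y ^ 2) x (k * f x * l).
Proof.
  intro Hf.
  replace (k * f x * l) with (/ 2 * k * (l * f x + f x * l)) by field.
  apply (derivable_pt_lim_ext (mult_real_fct (/ 2 * k) (f * f)%F)).
  - intro y; unfold mult_real_fct, mult_fct; ring.
  - exact (derivable_pt_lim_scal _ _ _ _ (derivable_pt_lim_mult f f x l l Hf Hf)).
Qed.

Lemma derivable_pt_lim_plus4 (f1 f2 f3 f4 : R -> R) (x l1 l2 l3 l4 : R) :
  derivable_pt_lim f1 x l1 -> derivable_pt_lim f2 x l2 ->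
  derivable_pt_lim f3 x l3 -> derivable_pt_lim f4 x l4 ->
  derivable_pt_lim (fun y => f1 y + f2 y + f3 y + f4 y) x (l1 + l2 + l3 + l4).
Proof.
  intros H1 H2 H3 H4.
  apply (derivable_pt_lim_plus (fun y => f1 y + f2 y + f3 y) f4); [| exact H4].
  apply (derivable_pt_lim_plus (fun y => f1 y + f2 y) f3); [| exact H3].
  exact (derivable_pt_lim_plus f1 f2 x l1 l2 H1 H2).
Qed.

Lemma derivable_pt_lim_sum_ch (F : chamber -> R -> R) (l : chamber -> R) (x : R) :
  (forall i, derivable_pt_lim (F i) x (l i)) ->
  derivable_pt_lim (fun y => sum_ch (fun i => F i y)) x (sum_ch l).
Proof. intro HF; apply derivable_pt_lim_plus4; apply HF. Qed.

Lemma derivable_pt_lim_sum_jk (F : vjk -> R -> R) (l : vjk -> R) (x : R) :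
  (forall c, derivable_pt_lim (F c) x (l c)) ->
  derivable_pt_lim (fun y => sum_jk (fun c => F c y)) x (sum_jk l).
Proof. intro HF; apply derivable_pt_lim_plus4; apply HF. Qed.

Lemma derivable_pt_lim_stored_energy (Epass V0 : chamber -> R) (C L : vjk -> R)
    (V dV : chamber -> R -> R) (p dp Q dQ : vjk -> R -> R) (t : R) :
  (forall i, derivable_pt_lim (V i) t (dV i t)) ->
  (forall c, derivable_pt_lim (p c) t (dp c t)) ->
  (forall c, derivable_pt_lim (Q c) t (dQ c t)) ->
  derivable_pt_lim
    (fun s => sum_ch (fun i => / 2 * Epass i * (V i s - V0 i) ^ 2)
              + sum_jk (fun c => / 2 * C c * p c s ^ 2 + / 2 * L c * Q c s ^ 2)) t
    (sum_ch (fun i => Epass i * (V i t - V0 i) * dV i t)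
     + sum_jk (fun c => C c * p c t * dp c t + L c * Q c t * dQ c t)).
Proof.
  intros HV Hp HQ.
  apply (derivable_pt_lim_plus (fun s => sum_ch _) (fun s => sum_jk _)).
  - apply derivable_pt_lim_sum_ch; intro i.
    apply (derivable_pt_lim_half_sq (fun s => V i s - V0 i)).
    apply derivable_pt_lim_sub_const, HV.
  - apply derivable_pt_lim_sum_jk; intro c.
    apply (derivable_pt_lim_plus (fun s => _ * p c s ^ 2) (fun s => _ * Q c s ^ 2));
      apply derivable_pt_lim_half_sq; auto.
Qed.

Lemma chamber_power {Epass Eact pEX V V0 dV pch : R} :
  pch = pEX + (Epass + Eact) * (V - V0) ->
  Epass * (V - V0) * dV = pch * dV + - Eact * (V - V0) * dV + - pEX * dV.
Proof. intros ->; ring. Qed.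

Lemma compliance_power {C p dp J : R} : C * dp = J -> C * p * dp = p * J.
Proof. intro HJ; rewrite <- HJ; ring. Qed.

Lemma inductance_power {L Rres Q dQ dp : R} :
  0 < Rres -> L / Rres * dQ = - Q - dp / Rres ->
  L * Q * dQ = - Rres * Q ^ 2 - Q * dp.
Proof.
  intros HR HdQ.
  replace (L * Q * dQ) with (Rres * Q * (L / Rres * dQ)) by (field; lra).
  rewrite HdQ; field; lra.
Qed.

(* No positivity of [r] is needed: with [/ 0 = 0] both sides vanish at [r = 0]. *)
Lemma valve_power {Qv dp r : R} : Qv = dp / r -> dp ^ 2 / r = Qv * dp.
Proof. intros ->; unfold Rdiv; ring. Qed.

Theorem proposition1
  (T : R)
  (* positive constants C_j^k, R_j^k, L_j^k *)
  (C Rres L : vjk -> R)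
  (HC : forall c, 0 < C c) (HR : forall c, 0 < Rres c) (HL : forall c, 0 < L c)
  (* chamber constants *)
  (V0 Epass : chamber -> R) (HEpass : forall i, 0 < Epass i)
  (* given functions *)
  (Eact : chamber -> R -> R) (pEX : R -> R)
  (* valve resistances *)
  (Rmin Rmax : valve -> R)
  (HRmin : forall v, 0 < Rmin v) (HRmax : forall v, 0 < Rmax v)
  (* unknowns: volumes, chamber pressures, vascular pressures and flows,
     valve flows, together with their derivatives *)
  (V : chamber -> R -> R) (dV : chamber -> R -> R)
  (pch : chamber -> R -> R)
  (p : vjk -> R -> R) (dp : vjk -> R -> R)
  (Q : vjk -> R -> R) (dQ : vjk -> R -> R)
  (Qv : valve -> R -> R)
  (* differentiability on (0,T) *)
  (HdV : forall i t, 0 < t < T -> derivable_pt_lim (V i) t (dV i t))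
  (Hdp : forall c t, 0 < t < T -> derivable_pt_lim (p c) t (dp c t))
  (HdQ : forall c t, 0 < t < T -> derivable_pt_lim (Q c) t (dQ c t))
  (* (i) algebraic relations *)
  (Hpch : forall i t, 0 < t < T ->
     pch i t = pEX t + (Epass i + Eact i t) * (V i t - V0 i))
  (HQMV : forall t, 0 < t < T ->
     Qv MV t = (pch LA t - pch LV t) / Rvalve (Rmin MV) (Rmax MV) (pch LA t) (pch LV t))
  (HQAV : forall t, 0 < t < T ->
     Qv AV t = (pch LV t - p ARSYS t) / Rvalve (Rmin AV) (Rmax AV) (pch LV t) (p ARSYS t))
  (HQTV : forall t, 0 < t < T ->
     Qv TV t = (pch RA t - pch RV t) / Rvalve (Rmin TV) (Rmax TV) (pch RA t) (pch RV t))
  (HQPV : forall t, 0 < t < T ->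
     Qv PV t = (pch RV t - p ARPUL t) / Rvalve (Rmin PV) (Rmax PV) (pch RV t) (p ARPUL t))
  (* (ii) chamber and compliance equations *)
  (HLA : forall t, 0 < t < T -> dV LA t = Q VENPUL t - Qv MV t)
  (HLV : forall t, 0 < t < T -> dV LV t = Qv MV t - Qv AV t)
  (HRA : forall t, 0 < t < T -> dV RA t = Q VENSYS t - Qv TV t)
  (HRV : forall t, 0 < t < T -> dV RV t = Qv TV t - Qv PV t)
  (HCARSYS : forall t, 0 < t < T -> C ARSYS * dp ARSYS t = Qv AV t - Q ARSYS t)
  (HCVENSYS : forall t, 0 < t < T -> C VENSYS * dp VENSYS t = Q ARSYS t - Q VENSYS t)
  (HCARPUL : forall t, 0 < t < T -> C ARPUL * dp ARPUL t = Qv PV t - Q ARPUL t)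
  (HCVENPUL : forall t, 0 < t < T -> C VENPUL * dp VENPUL t = Q ARPUL t - Q VENPUL t)
  (* (iii) inductance equations *)
  (HLARSYS : forall t, 0 < t < T ->
     L ARSYS / Rres ARSYS * dQ ARSYS t
     = - Q ARSYS t - (p VENSYS t - p ARSYS t) / Rres ARSYS)
  (HLVENSYS : forall t, 0 < t < T ->
     L VENSYS / Rres VENSYS * dQ VENSYS t
     = - Q VENSYS t - (pch RA t - p VENSYS t) / Rres VENSYS)
  (HLARPUL : forall t, 0 < t < T ->
     L ARPUL / Rres ARPUL * dQ ARPUL t
     = - Q ARPUL t - (p VENPUL t - p ARPUL t) / Rres ARPUL)
  (HLVENPUL : forall t, 0 < t < T ->
     L VENPUL / Rres VENPUL * dQ VENPUL t
     = - Q VENPUL t - (pch LA t - p VENPUL t) / Rres VENPUL) :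
  let M := fun t =>
    sum_ch (fun i => / 2 * Epass i * (V i t - V0 i) ^ 2)
    + sum_jk (fun c => / 2 * C c * (p c t) ^ 2 + / 2 * L c * (Q c t) ^ 2) in
  let Pi_act := fun t => sum_ch (fun i => - Eact i t * (V i t - V0 i) * dV i t) in
  let Pi_ex := fun t => sum_ch (fun i => - pEX t * dV i t) in
  let Pi_diss := fun t =>
    - (pch LA t - pch LV t) ^ 2 / Rvalve (Rmin MV) (Rmax MV) (pch LA t) (pch LV t)
    - (pch LV t - p ARSYS t) ^ 2 / Rvalve (Rmin AV) (Rmax AV) (pch LV t) (p ARSYS t)
    - (pch RA t - pch RV t) ^ 2 / Rvalve (Rmin TV) (Rmax TV) (pch RA t) (pch RV t)
    - (pch RV t - p ARPUL t) ^ 2 / Rvalve (Rmin PV) (Rmax PV) (pch RV t) (p ARPUL t)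
    + sum_jk (fun c => - Rres c * (Q c t) ^ 2) in
  forall t, 0 < t < T ->
    derivable_pt_lim M t (Pi_act t + Pi_diss t + Pi_ex t).
Proof.
  intros M Pi_act Pi_ex Pi_diss t Ht.
  refine (eq_rect _ (derivable_pt_lim M t)
            (derivable_pt_lim_stored_energy Epass V0 C L V dV p dp Q dQ t
               (fun i => HdV i t Ht) (fun c => Hdp c t Ht) (fun c => HdQ c t Ht)) _ _).
  unfold Pi_act, Pi_diss, Pi_ex, sum_ch, sum_jk.
  rewrite (chamber_power (Hpch LA t Ht)), (chamber_power (Hpch LV t Ht)),
    (chamber_power (Hpch RA t Ht)), (chamber_power (Hpch RV t Ht)).
  rewrite (compliance_power (HCARSYS t Ht)), (compliance_power (HCVENSYS t Ht)),
    (compliance_power (HCARPUL t Ht)), (compliance_power (HCVENPUL t Ht)).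
  rewrite (inductance_power (HR _) (HLARSYS t Ht)),
    (inductance_power (HR _) (HLVENSYS t Ht)),
    (inductance_power (HR _) (HLARPUL t Ht)),
    (inductance_power (HR _) (HLVENPUL t Ht)).
  (* The leading valve term of [Pi_diss] parses as [(- dp ^ 2) / r]. *)
  rewrite Ropp_div, (valve_power (HQMV t Ht)), (valve_power (HQAV t Ht)),
    (valve_power (HQTV t Ht)), (valve_power (HQPV t Ht)).
  rewrite (HLA t Ht), (HLV t Ht), (HRA t Ht), (HRV t Ht).
  ring.
Qed.
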